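(* Let $1\le k\le n$, $\sigma\in\mathcal D^\Delta_k$, $\tilde\sigma=\overline\psi_{n,k}(\sigma)=\tilde\sigma_1\cdots\tilde\sigma_k$, and let $\gamma$ be the increasing word $(s(\sigma)+1)(s(\sigma)+2)\cdots(n-e(\sigma))$. Then $\overline\psi_{n,n}$ restricts to a bijection from $\Delta^<_n(\sigma)=\{\pi\in B_n: dp(\pi)=\sigma,\ 0<\pi_n<n\}$ onto the set of shuffles $\alpha$ of $\tilde\sigma$ and $\gamma$ whose last letter is $\tilde\sigma_k$, and $\mathrm{fmaj}(\pi)=\mathrm{fmaj}(\overline\psi_{n,n}(\pi))$ for every $\pi\in\Delta^<_n(\sigma)$.
   Context: $B_n$ is the set of words $\pi=\pi_1\cdots\pi_n$ with $\pi_i\in\{\pm1,\dots,\pm n\}$ and $|\pi_1|\cdots|\pi_n|$ a permutation of $[n]$; $\mathcal D^\Delta_k$ is the set of $\sigma\in B_k$ with $\sigma_k>0$ and $\sigma_i\ne i$ for all $i$. For a word of nonzero integers with distinct absolute values $a_1<\dots<a_m$, its reduction replaces each letter $\pm a_j$ by $\pm j$; $dp(\pi)$ is the reduction of the subword of letters $\pi_i$ with $\pi_i\ne i$. For $\sigma\in B_k$, the letter $\sigma_j$ is a subcedant if $\sigma_j<j$, an excedant if $\sigma_j>j$, a fixed point if $\sigma_j=j$; $s(\sigma)$, $e(\sigma)$ are the numbers of subcedants and excedants. For $k\le n$, $\overline\psi_{n,k}(\sigma)$ is obtained from $\sigma$ by replacing the $i$-th smallest in absolute value subcedant $\sigma_j$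 by $\mathrm{sgn}(\sigma_j)\,i$ ($1\le i\le s(\sigma)$), the $i$-th smallest fixed point by $s(\sigma)+i$, and the $i$-th largest excedant by $n-i+1$ ($1\le i\le e(\sigma)$). A shuffle of two words with disjoint sets of letters is a word containing both as subsequences and consisting of exactly their letters. Order $\prec$: $-1\prec-2\prec\cdots\prec-N\prec1\prec\cdots\prec N$; $\mathrm{maj}_\prec(w)=\sum_{i:w_i\succ w_{i+1}}i$; $\mathrm{fmaj}(w)=2\mathrm{maj}_\prec(w)+\mathrm{neg}(w)$ with $\mathrm{neg}(w)$ the number of negative letters. *)

From mathcomp Require Import all_boot all_order all_algebra.
Set Implicit Arguments. Unset Strict Implicit. Unset Printing Implicit Defensive.
Import Order.TTheory GRing.Theory Num.Theory.
Local Open Scope ring_scope.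

(* Words are sequences of integers; positions are 1-based. *)

(* w is in B_n: |w_1| ... |w_n| is a permutation of [n] (so no letter is 0). *)
Definition signed_perm (n : nat) (w : seq int) : bool :=
  perm_eq [seq absz x | x <- w] (iota 1 n).

Definition letter (w : seq int) (i : nat) : int := nth 0 w i.-1.

Definition posw (w : seq int) : seq (int * nat) := zip w (iota 1 (size w)).

Definition DDelta (k : nat) (s : seq int) : bool :=
  [&& signed_perm k s, 0 < letter s k & all (fun p => p.1 != p.2%:Z) (posw s)].

(* reduction of a word with distinct absolute values *)
Definition red (w : seq int) : seq int :=
  [seq sgz x * (count (fun y => (absz y <= absz x)%N) w)%:Z | x <- w].

Definition dp (w : seq int) : seq int :=
  red [seq p.1 | p <- posw w & p.1 != p.2%:Z].

Definition subc (w : seq int) : seq int := [seq p.1 | p <- posw w & p.1 < p.2%:Z].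
Definition fixp (w : seq int) : seq int := [seq p.1 | p <- posw w & p.1 == p.2%:Z].
Definition exc  (w : seq int) : seq int := [seq p.1 | p <- posw w & p.2%:Z < p.1].

Definition s_num (w : seq int) : nat := size (subc w).
Definition e_num (w : seq int) : nat := size (exc w).

(* overline{psi}_{n,k} (k is the length of the word) *)
Definition psibar (n : nat) (w : seq int) : seq int :=
  [seq (let x := p.1 in let j := p.2 in
        if x < j%:Z then
          sgz x * (count (fun y => (absz y <= absz x)%N) (subc w))%:Z
        else if x == j%:Z then
          (s_num w + count (fun y => y <= x) (fixp w))%:Z
        else
          n.+1%:Z - (count (fun y => x <= y) (exc w))%:Z)
  | p <- posw w].

Definition shuffle (u v alpha : seq int) : bool :=
  [&& subseq u alpha, subseq v alpha & perm_eq alpha (u ++ v)].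

Definition prec (x y : int) : bool :=
  if x < 0 then (if y < 0 then (absz x < absz y)%N else true)
  else (if y < 0 then false else x < y).

Definition maj_prec (w : seq int) : nat :=
  \sum_(1 <= i < size w | prec (letter w i.+1) (letter w i)) i.

Definition neg (w : seq int) : nat := count (fun x => x < 0) w.

Definition fmaj (w : seq int) : nat := 2 * maj_prec w + neg w.

Definition Delta_lt (n : nat) (sigma : seq int) (pi : seq int) : bool :=
  [&& signed_perm n pi, dp pi == sigma, 0 < letter pi n & letter pi n < n%:Z].

Definition gamma_word (n : nat) (sigma : seq int) : seq int :=
  [seq i%:Z | i <- iota (s_num sigma).+1 (n - e_num sigma - s_num sigma)].

(* A letter of a signed permutation [pi] is a subcedant, a fixed point or an
   excedant, and [psibar n] relabels each class monotonically into the blocks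
   [-s, s], [s + 1, n - e] and [n - e + 1, n].  Adjacent letters of different
   classes are ordered like their classes, so [psibar n] preserves signs and the
   comparisons of adjacent letters in the order [prec], hence [fmaj].
   The fixed points of [pi] are exactly the letters sent into [gamma], while the
   relabelling of the other letters factors through their reduction [dp pi = sigma]
   and gives [psibar n sigma]: so [psibar n pi] is the shuffle of the two words
   along the mask of non-fixed positions of [pi].  Conversely a shuffle determines
   this mask, and [pi] is rebuilt by spreading [sigma] over the masked positions
   and filling the others with fixed points; the condition on the last letter is
   [0 < pi_n < n]. *)

From mathcomp Require Import all_boot all_order all_algebra zify.
Import Order.TTheory GRing.Theory Num.Theory.
Local Open Scope ring_scope.
Set Implicit Arguments. Unset Strict Implicit. Unset Printing Implicit Defensive.

Lemma sub_count_lt (T : eqType) (a b : pred T) s y :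
  subpred a b -> y \in s -> b y -> ~~ a y -> (count a s < count b s)%N.
Proof.
move=> ab; elim: s => //= x s IH; rewrite in_cons => /orP [/eqP <- hby nay|ys hby nay].
  by have := sub_count ab s; rewrite hby (negbTE nay); lia.
have := IH ys hby nay; case ax: (a x); first by rewrite (ab _ ax); lia.
by case: (b x); lia.
Qed.

Definition rank (s : seq nat) (t : nat) : nat := count (fun j => (j <= t)%N) s.

Lemma rank_gt0 s t : t \in s -> (0 < rank s t)%N.
Proof. by move=> ts; rewrite -has_count; apply/hasP; exists t. Qed.

Lemma leq_rank s t1 t2 : t1 \in s -> (rank s t1 <= rank s t2)%N = (t1 <= t2)%N.
Proof.
move=> t1s; case: (leqP t1 t2) => h.
  by apply: sub_count => j /= /leq_trans; apply.
apply/negbTE; rewrite -ltnNge (sub_count_lt _ t1s) // ?leqnn -?ltnNge // => j /=.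
by move/leq_trans; apply; apply: ltnW.
Qed.

Lemma ltn_rank s t1 t2 : t2 \in s -> (rank s t1 < rank s t2)%N = (t1 < t2)%N.
Proof. by move=> h; rewrite !ltnNge leq_rank. Qed.

Lemma eqn_rank s t1 t2 : t1 \in s -> t2 \in s -> (rank s t1 == rank s t2) = (t1 == t2).
Proof. by move=> h1 h2; rewrite !eqn_leq !leq_rank. Qed.

Lemma map_rank_sorted s : sorted ltn s -> map (rank s) s = iota 1 (size s).
Proof.
elim: s => //= x s IH xs_sorted.
have allgt : all (ltn x) s := order_path_min ltn_trans xs_sorted.
have rank_x : rank s x = 0%N.
  apply/eqP; rewrite -leqn0 leqNgt -has_count -all_predC.
  by apply: sub_all allgt => y /=; rewrite -ltnNge.
rewrite /rank /= leqnn -/(rank s x) rank_x; congr (_ :: _).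
rewrite -[2%N]/(1 + 1)%N iotaDl -IH ?(path_sorted xs_sorted) // -map_comp.
by apply/eq_in_map => y /(allP allgt) /= /ltnW ->.
Qed.

Lemma rank_iota k t : (0 < t <= k)%N -> rank (iota 1 k) t = t.
Proof.
case: t => // t /= ht; have := map_rank_sorted (iota_ltn_sorted 1 k).
rewrite size_iota => /(congr1 (nth 0%N ^~ t)).
by rewrite (nth_map 0%N) ?size_iota ?nth_iota ?add1n //; lia.
Qed.

Lemma size_posw w : size (posw w) = size w.
Proof. by rewrite /posw size_zip size_iota minnn. Qed.

Lemma nth_posw w i : (i < size w)%N -> nth (0, 0%N) (posw w) i = (nth 0 w i, i.+1).
Proof. by move=> hi; rewrite /posw nth_zip ?size_iota // nth_iota // add1n. Qed.

Lemma mem_posw w p : p \in posw w -> exists2 i, (i < size w)%N & p = (nth 0 w i, i.+1).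
Proof.
move/(nthP (0, 0%N)) => [i]; rewrite size_posw => hi <-.
by exists i => //; rewrite nth_posw.
Qed.

Lemma unzip1_posw w : map fst (posw w) = w.
Proof. by apply: (unzip1_zip (t := iota 1 (size w))); rewrite size_iota. Qed.

Lemma unzip2_posw w : map snd (posw w) = iota 1 (size w).
Proof. by apply: (unzip2_zip (s := w)); rewrite size_iota. Qed.

Lemma posw_gt0 w p : p \in posw w -> (0 < p.2)%N.
Proof. by case/mem_posw => i _ ->. Qed.

Lemma size_signed_perm n w : signed_perm n w -> size w = n.
Proof. by move/perm_size; rewrite size_map size_iota. Qed.

Lemma signed_perm_abs n w x : signed_perm n w -> x \in w -> (0 < absz x <= n)%N.
Proof.
move=> sp xw; have: absz x \in iota 1 n by rewrite -(perm_mem sp) map_f.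
by rewrite mem_iota; lia.
Qed.

Lemma signed_perm_uniq n w : signed_perm n w -> uniq (map absz w).
Proof. by move/perm_uniq->; apply: iota_uniq. Qed.

Lemma signed_perm_posw n w p : signed_perm n w -> p \in posw w -> (0 < absz p.1 <= n)%N.
Proof. by move=> sp /mem_posw [i hi ->]; apply: signed_perm_abs sp (mem_nth 0 hi). Qed.

Lemma mem_letter_posw w i : (0 < i <= size w)%N -> (letter w i, i) \in posw w.
Proof.
case: i => // i /= hi; rewrite /letter /= -nth_posw //.
by rewrite mem_nth // size_posw.
Qed.

Section LetterMap.
Variable L : seq (int * nat).

Definition subc_pos : seq int := [seq p.1 | p <- L & p.1 < p.2%:Z].
Definition fixp_pos : seq int := [seq p.1 | p <- L & p.1 == p.2%:Z].
Definition exc_pos : seq int := [seq p.1 | p <- L & p.2%:Z < p.1].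

Definition subc_rank (x : int) : nat := count (fun y => (absz y <= absz x)%N) subc_pos.
Definition fixp_rank (x : int) : nat := count (fun y => y <= x) fixp_pos.
Definition exc_rank (x : int) : nat := count (fun y => x <= y) exc_pos.

Definition psibar_at (n : nat) (p : int * nat) : int :=
  if p.1 < p.2%:Z then sgz p.1 * (subc_rank p.1)%:Z
  else if p.1 == p.2%:Z then (size subc_pos + fixp_rank p.1)%:Z
  else n.+1%:Z - (exc_rank p.1)%:Z.

Lemma size_subc_fixp_exc :
  (size subc_pos + size fixp_pos + size exc_pos)%N = size L.
Proof.
rewrite !size_map; elim: L => //= -[x j] L' IH /=.
by case: (ltgtP x j%:Z) => /=; lia.
Qed.

Lemma mem_subc_pos p : p \in L -> p.1 < p.2%:Z -> p.1 \in subc_pos.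
Proof. by move=> pL h; apply/mapP; exists p; rewrite ?mem_filter ?h. Qed.

Lemma mem_fixp_pos p : p \in L -> p.1 = p.2%:Z -> p.1 \in fixp_pos.
Proof. by move=> pL h; apply/mapP; exists p; rewrite ?mem_filter ?h ?eqxx. Qed.

Lemma mem_exc_pos p : p \in L -> p.2%:Z < p.1 -> p.1 \in exc_pos.
Proof. by move=> pL h; apply/mapP; exists p; rewrite ?mem_filter ?h. Qed.

Lemma subc_rank_gt0 x : x \in subc_pos -> (0 < subc_rank x)%N.
Proof. by move=> xS; rewrite -has_count; apply/hasP; exists x. Qed.

Lemma fixp_rank_gt0 x : x \in fixp_pos -> (0 < fixp_rank x)%N.
Proof. by move=> xF; rewrite -has_count; apply/hasP; exists x. Qed.

Lemma exc_rank_gt0 x : x \in exc_pos -> (0 < exc_rank x)%N.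
Proof. by move=> xE; rewrite -has_count; apply/hasP; exists x. Qed.

Lemma subc_rank_le x : (subc_rank x <= size subc_pos)%N.
Proof. exact: count_size. Qed.

Lemma fixp_rank_le x : (fixp_rank x <= size fixp_pos)%N.
Proof. exact: count_size. Qed.

Lemma exc_rank_le x : (exc_rank x <= size exc_pos)%N.
Proof. exact: count_size. Qed.

Lemma rank_gt0_class p : p \in L ->
  [/\ p.1 < p.2%:Z -> (0 < subc_rank p.1)%N,
      p.1 = p.2%:Z -> (0 < fixp_rank p.1)%N &
      p.2%:Z < p.1 -> (0 < exc_rank p.1)%N].
Proof.
move=> pL; split=> h.
- exact/subc_rank_gt0/mem_subc_pos.
- exact/fixp_rank_gt0/mem_fixp_pos.
- exact/exc_rank_gt0/mem_exc_pos.
Qed.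

Lemma subc_rank_lt x y : y \in subc_pos -> (absz x < absz y)%N -> (subc_rank x < subc_rank y)%N.
Proof. by move=> yS h; apply: (sub_count_lt _ yS) => //= [z|]; lia. Qed.

Lemma fixp_rank_lt x y : y \in fixp_pos -> x < y -> (fixp_rank x < fixp_rank y)%N.
Proof. by move=> yF h; apply: (sub_count_lt _ yF) => //= [z|]; lia. Qed.

Lemma exc_rank_lt x y : x \in exc_pos -> x < y -> (exc_rank y < exc_rank x)%N.
Proof. by move=> xE h; apply: (sub_count_lt _ xE) => //= [z|]; lia. Qed.

End LetterMap.

Lemma psibarE n w : psibar n w = map (psibar_at (posw w) n) (posw w).
Proof. by []. Qed.

Lemma letter_psibar n w i : (0 < i <= size w)%N ->
  letter (psibar n w) i = psibar_at (posw w) n (letter w i, i).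
Proof.
case: i => // i /= hi; rewrite psibarE /letter /= (nth_map (0, 0%N)) ?size_posw //.
by rewrite nth_posw.
Qed.

Lemma prec_mono x y x' y' : x != 0 -> y != 0 -> sgz x' = sgz x -> sgz y' = sgz y ->
  (x' < y') = (x < y) -> (y' < x') = (y < x) -> prec x' y' = prec x y.
Proof.
move=> x0 y0 sx sy exy eyx.
have neg_x' : (x' < 0) = (x < 0) by rewrite -[LHS]sgz_lt0 sx sgz_lt0.
have neg_y' : (y' < 0) = (y < 0) by rewrite -[LHS]sgz_lt0 sy sgz_lt0.
have abs_neg u v : u < 0 -> v < 0 -> (absz u < absz v)%N = (v < u).
  by move=> *; apply/idP/idP; lia.
rewrite /prec neg_x' neg_y'.
case: (ltrP x 0) => hx; case: (ltrP y 0) => hy //.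
by rewrite !abs_neg ?neg_x' ?neg_y'.
Qed.

Section FmajInvariance.
Variables (n : nat) (w : seq int).
Hypothesis sp : signed_perm n w.
Local Notation L := (posw w).
Local Notation g := (psibar_at (posw w) n).

Lemma size_classes : (size (subc_pos L) + size (fixp_pos L) + size (exc_pos L))%N = n.
Proof. by rewrite size_subc_fixp_exc size_posw (size_signed_perm sp). Qed.

Lemma sgz_psibar_at p : p \in L -> sgz (g p) = sgz p.1.
Proof.
move=> pL; have /andP [x0 _] := signed_perm_posw sp pL; have j0 := posw_gt0 pL.
rewrite /psibar_at; case: (ltgtP p.1 p.2%:Z) => h.
- have := subc_rank_gt0 (mem_subc_pos pL h).
  by rewrite sgzM sgz_id -ltz_nat => /gtr0_sgz ->; rewrite mulr1.
- have x_pos : 0 < p.1 by lia.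
  have c_le := exc_rank_le L p.1; have sz := size_classes.
  have v_pos : 0 < n.+1%:Z - (exc_rank L p.1)%:Z by lia.
  by rewrite (gtr0_sgz v_pos) (gtr0_sgz x_pos).
- have x_pos : 0 < p.1 by lia.
  have c_pos := fixp_rank_gt0 (mem_fixp_pos pL h).
  have v_pos : 0 < (size (subc_pos L) + fixp_rank L p.1)%N%:Z by lia.
  by rewrite (gtr0_sgz v_pos) (gtr0_sgz x_pos).
Qed.

(* Letters at adjacent positions compare like their classes (subcedant < fixed point
   < excedant), and within a class the ranks are monotone. *)
Lemma ltr_psibar_at_adjacent i : (0 < i < n)%N ->
  let a := letter w i in let b := letter w i.+1 in
  (g (a, i) < g (b, i.+1)) = (a < b) /\ (g (b, i.+1) < g (a, i)) = (b < a).
Proof.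
move=> hi a b; have sz := size_signed_perm sp.
have aL : (a, i) \in L by apply: mem_letter_posw; lia.
have bL : (b, i.+1) \in L by apply: mem_letter_posw; lia.
have /andP [a0 _] := signed_perm_posw sp aL; have /andP [b0 _] := signed_perm_posw sp bL.
have ab : absz a != absz b.
  have h1 : (i.-1 < size (map absz w))%N by rewrite size_map sz; lia.
  have h2 : (i < size (map absz w))%N by rewrite size_map sz; lia.
  have := nth_uniq 0%N h1 h2 (signed_perm_uniq sp); rewrite size_map in h1 h2.
  by rewrite !(nth_map 0) // /a /b /letter /= => ->; lia.
have hsz := size_classes.
have Sa := subc_rank_le L a; have Sb := subc_rank_le L b.
have Fa := fixp_rank_le L a; have Fb := fixp_rank_le L b.
have Ea := exc_rank_le L a; have Eb := exc_rank_le L b.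
have [Sa0 Fa0 Ea0] := rank_gt0_class aL; have [Sb0 Fb0 Eb0] := rank_gt0_class bL.
rewrite /psibar_at /= in Sa0 Fa0 Ea0 Sb0 Fb0 Eb0 *.
case: (ltgtP a i%:Z) => ha; case: (ltgtP b i.+1%:Z) => hb.
all: try by split; apply/idP/idP; lia.
- have := @subc_rank_lt L a b (mem_subc_pos bL hb).
  have := @subc_rank_lt L b a (mem_subc_pos aL ha).
  by split; apply/idP/idP; lia.
- have := @exc_rank_lt L a b (mem_exc_pos aL ha).
  have := @exc_rank_lt L b a (mem_exc_pos bL hb).
  by split; apply/idP/idP; lia.
- have := @fixp_rank_lt L a b (mem_fixp_pos bL hb).
  by split; apply/idP/idP; lia.
Qed.

Lemma fmaj_psibar : fmaj (psibar n w) = fmaj w.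
Proof.
have sz := size_signed_perm sp.
have szg : size (psibar n w) = size w by rewrite psibarE size_map size_posw.
rewrite /fmaj; congr (2 * _ + _)%N.
  rewrite /maj_prec szg big_nat_cond [RHS]big_nat_cond; apply: eq_bigl => i.
  rewrite ?andbT; case: (boolP (1 <= i < size w)%N) => //= hi.
  rewrite !letter_psibar; try lia.
  have hi' : (0 < i < n)%N by lia.
  have [lt_ab lt_ba] := ltr_psibar_at_adjacent hi'.
  have aL : (letter w i, i) \in L by apply: mem_letter_posw; lia.
  have bL : (letter w i.+1, i.+1) \in L by apply: mem_letter_posw; lia.
  have /andP [a0 _] := signed_perm_posw sp aL; have /andP [b0 _] := signed_perm_posw sp bL.
  by apply: prec_mono; rewrite ?sgz_psibar_at //= -absz_gt0.
rewrite /neg psibarE count_map -[in RHS](unzip1_posw w) count_map.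
by apply: eq_in_count => p pL /=; rewrite -sgz_lt0 sgz_psibar_at // sgz_lt0.
Qed.

End FmajInvariance.

Lemma filter_subpred (T : Type) (a b : pred T) s :
  subpred a b -> filter a (filter b s) = filter a s.
Proof.
move=> ab; rewrite -filter_predI; apply: eq_filter => x /=.
by case ax: (a x); rewrite // ab.
Qed.

Definition nonfixed (p : int * nat) : bool := p.1 != p.2%:Z.

Section Decomposition.
Variables (n : nat) (pi : seq int).
Hypothesis sp : signed_perm n pi.
Local Notation L := (posw pi).
Local Notation P := (filter nonfixed (posw pi)).
Local Notation Q := (filter (predC nonfixed) (posw pi)).

Definition nonfixed_rank (t : nat) : nat := rank (map snd P) t.
Definition dp_letter (x : int) : int := sgz x * (nonfixed_rank (absz x))%:Z.
Definition dp_pos (q : int * nat) : int * nat := (dp_letter q.1, nonfixed_rank q.2).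

Lemma sorted_posw_filter (a : pred (int * nat)) : sorted ltn (map snd (filter a L)).
Proof.
apply: (subseq_sorted ltn_trans (map_subseq _ (filter_subseq a L))).
by rewrite unzip2_posw; apply: iota_ltn_sorted.
Qed.

Lemma fixed_posw q : q \in Q -> q.1 = q.2%:Z.
Proof. by rewrite mem_filter /= /nonfixed negbK => /andP [/eqP]. Qed.

(* Fixed points carry their own position as absolute value, so the remaining
   absolute values are exactly the remaining positions. *)
Lemma perm_abs_nonfixed : perm_eq (map absz (map fst P)) (map snd P).
Proof.
rewrite -(perm_cat2r (map snd Q)) -map_comp.
have fixedQ : map (absz \o fst) Q = map snd Q.
  by apply/eq_in_map => q /fixed_posw /= ->.
rewrite -{1}fixedQ -!map_cat; apply: (@perm_trans _ (map (absz \o fst) L)).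
  by apply: perm_map; rewrite perm_filterC.
apply: (@perm_trans _ (map snd L)); last by apply: perm_map; rewrite perm_sym perm_filterC.
by rewrite map_comp unzip1_posw unzip2_posw (size_signed_perm sp).
Qed.

Lemma count_abs_nonfixed t :
  count (fun y => (absz y <= t)%N) (map fst P) = nonfixed_rank t.
Proof. by rewrite -(count_map absz (leq^~ t)); apply: (permP perm_abs_nonfixed). Qed.

Lemma dpE : dp pi = map dp_letter (map fst P).
Proof. by apply: eq_map => x; rewrite /dp_letter -count_abs_nonfixed. Qed.

Lemma nonfixed_posw q : q \in P -> [/\ q \in L, q.1 != q.2%:Z,
  absz q.1 \in map snd P, q.2 \in map snd P & (0 < absz q.1)%N].
Proof.
move=> qP; have := qP; rewrite mem_filter => /andP [nf qL]; split=> //.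
- by rewrite -(perm_mem perm_abs_nonfixed) !map_f.
- exact: map_f.
- by have /andP [] := signed_perm_posw sp qL.
Qed.

Lemma dp_letter_abs x : absz x \in map snd P -> (0 < absz x)%N ->
  absz (dp_letter x) = nonfixed_rank (absz x).
Proof. by move=> /rank_gt0; rewrite /dp_letter /nonfixed_rank; lia. Qed.

Lemma dp_letter_sgz x : absz x \in map snd P -> (0 < absz x)%N -> sgz (dp_letter x) = sgz x.
Proof. by move=> /rank_gt0; rewrite /dp_letter /nonfixed_rank; lia. Qed.

(* Reducing a non-fixed letter and its position by the same increasing relabelling
   keeps it a subcedant, resp. an excedant. *)
Lemma dp_pos_class q : q \in P -> let: (x, j) := dp_pos q in
  [/\ (x < j%:Z) = (q.1 < q.2%:Z), (x == j%:Z) = false & (j%:Z < x) = (q.2%:Z < q.1)].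
Proof.
move=> /nonfixed_posw [qL nf xP jP x0]; have j0 := posw_gt0 qL.
have r1 := rank_gt0 xP; have r2 := rank_gt0 jP.
have l1 := ltn_rank (absz q.1) jP; have l2 := ltn_rank q.2 xP.
have e12 := eqn_rank xP jP.
rewrite /dp_pos /dp_letter /nonfixed_rank.
move: (rank _ _) (rank _ _) r1 r2 l1 l2 e12 => c d r1 r2 l1 l2 e12.
by move: q.1 q.2 x0 nf j0 l1 l2 e12 => x j *; split; apply/idP/idP; lia.
Qed.

Lemma subc_pos_nonfixed : subc_pos L = subc_pos P.
Proof. by rewrite /subc_pos filter_subpred // => q /=; rewrite /nonfixed; lia. Qed.

Lemma exc_pos_nonfixed : exc_pos L = exc_pos P.
Proof. by rewrite /exc_pos filter_subpred // => q /=; rewrite /nonfixed; lia. Qed.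

Lemma subc_pos_dp : subc_pos (map dp_pos P) = map dp_letter (subc_pos P).
Proof.
rewrite /subc_pos filter_map -!map_comp; congr map.
by apply: eq_in_filter => q /dp_pos_class /= [].
Qed.

Lemma exc_pos_dp : exc_pos (map dp_pos P) = map dp_letter (exc_pos P).
Proof.
rewrite /exc_pos filter_map -!map_comp; congr map.
by apply: eq_in_filter => q /dp_pos_class /= [_ _ ->].
Qed.

Lemma mem_subc_posP x : x \in subc_pos P -> exists2 q, q \in P & q.1 = x /\ q.1 < q.2%:Z.
Proof. by case/mapP => q; rewrite mem_filter => /andP [h qP] ->; exists q. Qed.

Lemma mem_exc_posP x : x \in exc_pos P -> exists2 q, q \in P & q.1 = x /\ q.2%:Z < q.1.
Proof. by case/mapP => q; rewrite mem_filter => /andP [h qP] ->; exists q. Qed.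

Lemma psibar_at_dp_pos q : q \in P -> psibar_at (map dp_pos P) n (dp_pos q) = psibar_at L n q.
Proof.
case: q => x j qP; have [qL nf xP jP x0] := nonfixed_posw qP.
have /= [lt_dp eq_dp _] := dp_pos_class qP.
rewrite /psibar_at /= lt_dp eq_dp (negbTE nf) /=.
case: ifP => hsub.
  rewrite dp_letter_sgz //; congr (_ * _%:Z).
  rewrite /subc_rank subc_pos_dp subc_pos_nonfixed count_map.
  apply: eq_in_count => y /mem_subc_posP [[x' j'] q'P [/= <- _]] /=.
  have [_ _ x'P _ x'0] := nonfixed_posw q'P.
  by rewrite !dp_letter_abs // /nonfixed_rank leq_rank.
congr (_ - _%:Z).
rewrite /exc_rank exc_pos_dp exc_pos_nonfixed count_map.
apply: eq_in_count => y /mem_exc_posP [[x' j'] q'P [/= <- h']] /=.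
have [q'L _ x'P _ x'0] := nonfixed_posw q'P.
have hx : j%:Z < x by move/negbT: hsub; move: nf => /=; lia.
have := posw_gt0 qL; have := posw_gt0 q'L.
have := leq_rank (absz x') xP; have := leq_rank (absz x) x'P.
have := rank_gt0 xP; have := rank_gt0 x'P.
rewrite /dp_letter /nonfixed_rank /=.
by move: (rank _ (absz x)) (rank _ (absz x')) => c d *; apply/idP/idP; lia.
Qed.

Lemma posw_dp : posw (dp pi) = map dp_pos P.
Proof.
have ranks : map nonfixed_rank (map snd P) = iota 1 (size P).
  by rewrite map_rank_sorted ?sorted_posw_filter // size_map.
by rewrite /posw dpE !size_map -ranks /dp_pos; elim: P => //= q s ->.
Qed.

Lemma psibar_dp : psibar n (dp pi) = map (psibar_at L n) P.
Proof.
rewrite psibarE posw_dp -map_comp; apply/eq_in_map => q qP /=.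
exact: psibar_at_dp_pos.
Qed.

Lemma s_num_dp : s_num (dp pi) = size (subc_pos L).
Proof.
change (size (subc_pos (posw (dp pi))) = size (subc_pos L)).
by rewrite posw_dp subc_pos_dp size_map subc_pos_nonfixed.
Qed.

Lemma e_num_dp : e_num (dp pi) = size (exc_pos L).
Proof.
change (size (exc_pos (posw (dp pi))) = size (exc_pos L)).
by rewrite posw_dp exc_pos_dp size_map exc_pos_nonfixed.
Qed.

Lemma gamma_word_dp : map (psibar_at L n) Q = gamma_word n (dp pi).
Proof.
have fixpQ : fixp_pos L = map (fun q => q.2%:Z) Q.
  rewrite /fixp_pos (_ : filter _ L = Q); last by apply: eq_filter => q; rewrite /= /nonfixed negbK.
  by apply/eq_in_map => q /fixed_posw.
have sizeQ : size Q = (n - size (exc_pos L) - size (subc_pos L))%N.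
  by have := size_classes sp; rewrite fixpQ size_map; lia.
rewrite /gamma_word s_num_dp e_num_dp -sizeQ -addn1 iotaDl.
rewrite -(size_map snd) -map_rank_sorted ?sorted_posw_filter // -!map_comp.
apply/eq_in_map => q qQ /=; rewrite /psibar_at (fixed_posw qQ) ltxx eqxx.
by rewrite /fixp_rank fixpQ /rank !count_map addnC; congr (Posz (_ + _)); apply: eq_count => j /=.
Qed.

End Decomposition.

Section Interleave.
Variable T : Type.
Implicit Types (m : bitseq) (A B : seq T).

(* Inverse of splitting along the mask [m], see [interleave_mask]. *)
Fixpoint interleave m A B : seq T :=
  if m is b :: m' then
    if b then (if A is x :: A' then x :: interleave m' A' B else [::])
    else (if B is y :: B' then y :: interleave m' A B' else [::])
  else [::].

Definition fits m A B := size A = count id m /\ size B = count negb m.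

Lemma interleave_filter (U : Type) (a : pred U) (f : U -> T) s :
  interleave (map a s) (map f (filter a s)) (map f (filter (predC a) s)) = map f s.
Proof. by elim: s => //= x s IH; case: (a x) => /=; rewrite IH. Qed.

Lemma interleave_mask m s : size m = size s -> interleave m (mask m s) (mask (map negb m) s) = s.
Proof. by elim: m s => [|b m IH] [|x s] //= [hs]; case: b => /=; rewrite IH. Qed.

Lemma size_interleave m A B : fits m A B -> size (interleave m A B) = size m.
Proof.
elim: m A B => [|[] m IH] A B //= [hA hB].
  by case: A hA => // x A [hA] /=; rewrite IH.
by case: B hB => // x B [hB] /=; rewrite IH.
Qed.

Lemma filter_interleave (a : pred T) m A B : fits m A B -> all a A -> all (predC a) B ->
  filter a (interleave m A B) = A /\ map a (interleave m A B) = m.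
Proof.
elim: m A B => [|[] m IH] A B /= [hA hB]; first by case: A hA => //; case: B hB.
  case: A hA => // x A [hA] /= /andP [-> aA] aB.
  by have [-> ->] := IH A B (conj hA hB) aA aB.
case: B hB => // x B [hB] /= aA /andP [/negbTE -> aB].
by have [-> ->] := IH A B (conj hA hB) aA aB.
Qed.

Lemma last_interleave (x0 : T) m A B : fits m A B -> last false m ->
  last x0 (interleave m A B) = last x0 A.
Proof.
elim: m A B x0 => [|b m IH] A B x0 [hA hB] //.
case: m IH hA hB => [|b' m] IH hA hB.
  by case: b hA hB => // hA hB _; case: A hA => // x [|].
move=> hl; change (is_true (last b' m)) in hl.
have A_gt0 : (0 < count id (b' :: m))%N.
  by rewrite -has_count; apply/hasP; exists (last b' m); rewrite ?mem_last.
case: b hA hB => hA hB.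
  case: A hA => // x A hA /=.
  by rewrite IH //; split; move: hA hB => /=; lia.
case: B hB => // y B hB /=.
rewrite IH //; last by split; move: hA hB => /=; lia.
by case: A hA A_gt0 => //= hA; lia.
Qed.

End Interleave.

Lemma map_interleave (T U : Type) (f : T -> U) m A B :
  map f (interleave m A B) = interleave m (map f A) (map f B).
Proof.
elim: m A B => [|[] m IH] A B //=; first by case: A => //= x A; rewrite IH.
by case: B => //= x B; rewrite IH.
Qed.

Lemma zip_interleave (T U : Type) m (A B : seq T) (A' B' : seq U) :
  fits m A B -> fits m A' B' ->
  zip (interleave m A B) (interleave m A' B') = interleave m (zip A A') (zip B B').
Proof.
elim: m A B A' B' => [|[] m IH] A B A' B' //= [hA hB] [hA' hB'].
  case: A hA => // x A [hA]; case: A' hA' => // x' A' [hA'] /=.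
  by rewrite IH.
case: B hB => // x B [hB]; case: B' hB' => // x' B' [hB'] /=.
by rewrite IH.
Qed.

Lemma perm_interleave (T : eqType) m (A B : seq T) : fits m A B ->
  perm_eq (interleave m A B) (A ++ B).
Proof.
elim: m A B => [|[] m IH] A B /= [hA hB]; first by case: A hA => //; case: B hB.
  by case: A hA => // x A [hA] /=; rewrite perm_cons; apply: IH.
case: B hB => // x B [hB] /=.
by rewrite -(cat1s x B) perm_sym perm_catCA /= perm_cons perm_sym; apply: IH.
Qed.

Lemma red_map_mono (f : nat -> nat) s :
  {in s, forall x, 0 < absz x}%N -> {in s, forall x, 0 < f (absz x)}%N ->
  {in s &, forall x y, (f (absz x) <= f (absz y))%N = (absz x <= absz y)%N} ->
  red (map (fun x => sgz x * (f (absz x))%:Z) s) = red s.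
Proof.
move=> s0 fs0 fmono; rewrite /red -map_comp; apply/eq_in_map => x xs /=.
have sgz_f y : y \in s -> sgz (sgz y * (f (absz y))%:Z) = sgz y.
  by move=> ys; have := s0 y ys; have := fs0 y ys; lia.
have abs_f y : y \in s -> absz (sgz y * (f (absz y))%:Z) = f (absz y).
  by move=> ys; have := s0 y ys; lia.
rewrite sgz_f // count_map; congr (_ * Posz _).
by apply: eq_in_count => y ys /=; rewrite !abs_f // fmono.
Qed.

Lemma red_signed_perm k s : signed_perm k s -> red s = s.
Proof.
move=> sp; rewrite /red -[RHS]map_id; apply/eq_in_map => x xs /=.
have /andP [x0 xk] := signed_perm_abs sp xs.
have -> : count (fun y => (absz y <= absz x)%N) s = absz x.
  by rewrite -(count_map absz (leq^~ (absz x))) (permP sp) -/(rank _ _) rank_iota ?x0.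
lia.
Qed.

(* Reduction forgets only the actual absolute values, which are fixed once their
   set is. *)
Lemma red_inj u1 u2 : perm_eq (map absz u1) (map absz u2) ->
  {in u1, forall x, 0 < absz x}%N -> {in u2, forall x, 0 < absz x}%N ->
  red u1 = red u2 -> u1 = u2.
Proof.
move=> hp u10 u20 hr.
have sz : size u1 = size u2 by have := perm_size hp; rewrite !size_map.
apply: (eq_from_nth (x0 := 0) sz) => i hi.
have := congr1 (nth 0 ^~ i) hr; rewrite /red !(nth_map 0) -?sz //.
have m1 : nth 0 u1 i \in u1 by rewrite mem_nth.
have m2 : nth 0 u2 i \in u2 by rewrite mem_nth -?sz.
have := u10 _ m1; have := u20 _ m2.
move: (nth 0 u1 i) (nth 0 u2 i) m1 m2 => x1 x2 m1 m2 x10 x20.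
have a1 : absz x1 \in map absz u1 by apply: map_f.
have a2 : absz x2 \in map absz u1 by rewrite (perm_mem hp); apply: map_f.
rewrite -(count_map absz (leq^~ (absz x1))) -(count_map absz (leq^~ (absz x2))).
rewrite -(permP hp) -/(rank _ _) -/(rank _ _).
have := rank_gt0 a1; have := rank_gt0 a2; have := eqn_rank a1 a2.
by move: (rank _ (absz x1)) (rank _ (absz x2)) => c1 c2 *; lia.
Qed.

Section InsertFixedPoints.
Variables (n k : nat) (sigma : seq int) (m : bitseq).
Hypotheses (k_gt0 : (0 < k)%N) (hD : DDelta k sigma).
Hypotheses (size_m : size m = n) (count_m : count id m = k) (last_m : last false m).

Local Notation N := (mask m (iota 1 n)).
Local Notation F := (mask (map negb m) (iota 1 n)).

Definition mask_pos (t : nat) : nat := nth 0%N N t.-1.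
Local Notation u := (map (fun x => sgz x * (mask_pos (absz x))%:Z) sigma).
Local Notation v := (map Posz F).

Definition insert_fixed : seq int := interleave m u v.

Lemma signed_perm_sigma : signed_perm k sigma.
Proof. by case/and3P: hD. Qed.

Lemma size_sigma : size sigma = k.
Proof. exact: size_signed_perm signed_perm_sigma. Qed.

Lemma count_negb_m : count negb m = (n - k)%N.
Proof.
change (count (predC id) m = (n - k)%N).
by have := count_predC id m; rewrite size_m count_m; lia.
Qed.

Lemma size_mask_m : size N = k.
Proof. by rewrite size_mask ?size_iota. Qed.

Lemma size_mask_negb_m : size F = (n - k)%N.
Proof. by rewrite size_mask ?size_map ?size_iota // count_map count_negb_m. Qed.

Lemma mask_pos_mem t : (0 < t <= k)%N -> mask_pos t \in N.
Proof. by case: t => // t /= h; rewrite /mask_pos /= mem_nth // size_mask_m. Qed.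

Lemma mask_pos_range t : (0 < t <= k)%N -> (0 < mask_pos t <= n)%N.
Proof. by move/mask_pos_mem/mem_mask; rewrite mem_iota; lia. Qed.

Lemma leq_mask_pos t1 t2 : (0 < t1 <= k)%N -> (0 < t2 <= k)%N ->
  (mask_pos t1 <= mask_pos t2)%N = (t1 <= t2)%N.
Proof.
have N_sorted : sorted ltn N.
  exact: (subseq_sorted ltn_trans (mask_subseq m (iota 1 n)) (iota_ltn_sorted 1 n)).
have ltn_mp t t' : (0 < t <= k)%N -> (0 < t' <= k)%N -> (t < t')%N ->
    (mask_pos t < mask_pos t')%N.
  case: t => // t; case: t' => // t' /= h h' lt_tt'.
  by apply: (sorted_ltn_nth ltn_trans 0%N N_sorted); rewrite ?inE ?size_mask_m //; lia.
move=> h1 h2; case: (ltngtP t1 t2) => h.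
- by rewrite ltnW // ltn_mp.
- by apply/negbTE; rewrite -ltnNge ltn_mp.
- by rewrite h leqnn.
Qed.

Lemma map_mask_pos : map mask_pos (iota 1 k) = N.
Proof.
rewrite -[RHS](mkseq_nth 0%N) size_mask_m /mkseq -[1%N]/(1 + 0)%N iotaDl -map_comp.
by apply: eq_map => t /=; rewrite /mask_pos add1n.
Qed.

Lemma sigma_abs x : x \in sigma -> (0 < absz x <= k)%N.
Proof. exact: signed_perm_abs signed_perm_sigma. Qed.

Lemma fits_uv : fits m u v.
Proof. by rewrite /fits !size_map size_sigma size_mask_negb_m count_m count_negb_m. Qed.

Lemma fits_mask_iota : fits m N F.
Proof. by rewrite /fits size_mask_m size_mask_negb_m count_m count_negb_m. Qed.

Lemma fits_posw : fits m (zip u N) (zip v F).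
Proof.
rewrite /fits !size_zip !size_map size_sigma size_mask_m size_mask_negb_m.
by rewrite count_m count_negb_m !minnn.
Qed.

Lemma size_insert_fixed : size insert_fixed = n.
Proof. by rewrite /insert_fixed (size_interleave fits_uv). Qed.

Lemma posw_insert_fixed : posw insert_fixed = interleave m (zip u N) (zip v F).
Proof.
rewrite /posw size_insert_fixed -{1}(@interleave_mask _ m (iota 1 n)) ?size_iota //.
exact: zip_interleave fits_uv fits_mask_iota.
Qed.

Lemma sigma_nonfixed i : (i < k)%N -> nth 0 sigma i != i.+1%:Z.
Proof.
move=> hi; case/and3P: hD => _ _ /allP /(_ (nth (0, 0%N) (posw sigma) i)).
by rewrite mem_nth ?size_posw ?size_sigma // nth_posw ?size_sigma //; apply.
Qed.

Lemma mask_pos_nonfixed x i : (0 < absz x <= k)%N -> (0 < i <= k)%N -> x != i%:Z ->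
  sgz x * (mask_pos (absz x))%:Z != (mask_pos i)%:Z.
Proof.
move=> x_abs i_range x_nf; have := mask_pos_range x_abs; have := mask_pos_range i_range.
by have := leq_mask_pos x_abs i_range; have := leq_mask_pos i_range x_abs; lia.
Qed.

Lemma all_nonfixed_u : all nonfixed (zip u N).
Proof.
apply/(all_nthP (0, 0%N)) => i; rewrite size_zip size_map size_sigma size_mask_m minnn => hi.
rewrite nth_zip ?size_map ?size_sigma ?size_mask_m // /nonfixed /= (nth_map 0) ?size_sigma //.
rewrite -/(mask_pos i.+1); apply: mask_pos_nonfixed.
- by apply/sigma_abs/mem_nth; rewrite size_sigma.
- by lia.
- exact: sigma_nonfixed.
Qed.

Lemma all_fixed_v : all (predC nonfixed) (zip v F).
Proof.
apply/(all_nthP (0, 0%N)) => i; rewrite size_zip size_map minnn => hi.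
by rewrite nth_zip ?size_map // (nth_map 0%N) // /= /nonfixed negbK.
Qed.

Lemma filter_nonfixed_insert_fixed : filter nonfixed (posw insert_fixed) = zip u N.
Proof.
rewrite posw_insert_fixed.
by case: (filter_interleave fits_posw all_nonfixed_u all_fixed_v).
Qed.

Lemma map_nonfixed_insert_fixed : map nonfixed (posw insert_fixed) = m.
Proof.
rewrite posw_insert_fixed.
by case: (filter_interleave fits_posw all_nonfixed_u all_fixed_v).
Qed.

Lemma dp_insert_fixed : dp insert_fixed = sigma.
Proof.
have unzip_u : map fst (zip u N) = u.
  by apply: (unzip1_zip (t := N)); rewrite size_map size_sigma size_mask_m.
rewrite /dp filter_nonfixed_insert_fixed unzip_u.
rewrite red_map_mono ?(red_signed_perm signed_perm_sigma) //.
- by move=> x /sigma_abs /andP [].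
- by move=> x /sigma_abs /mask_pos_range /andP [].
- by move=> x y /sigma_abs hx /sigma_abs hy; rewrite leq_mask_pos.
Qed.

Lemma signed_perm_insert_fixed : signed_perm n insert_fixed.
Proof.
rewrite /signed_perm /insert_fixed map_interleave.
apply: perm_trans (perm_interleave _) _.
  by have [su sv] := fits_uv; rewrite /fits !size_map -su -sv !size_map.
have abs_u : map absz u = map mask_pos (map absz sigma).
  by rewrite -!map_comp; apply/eq_in_map => x /sigma_abs hx /=; have := mask_pos_range hx; lia.
have abs_v : map absz v = F by rewrite -map_comp; apply: map_id.
have iotaE : iota 1 n = interleave m N F by rewrite interleave_mask // size_iota.
rewrite abs_u abs_v [X in perm_eq _ X]iotaE; apply: (@perm_trans _ (N ++ F)).
  by rewrite perm_cat2r -map_mask_pos; apply: perm_map signed_perm_sigma.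
by rewrite perm_sym; apply: perm_interleave fits_mask_iota.
Qed.

Lemma last_insert_fixed : letter insert_fixed n = (mask_pos (absz (letter sigma k)))%:Z.
Proof.
rewrite /letter -size_insert_fixed nth_last /insert_fixed (last_interleave _ fits_uv last_m).
rewrite -nth_last size_map size_sigma (nth_map 0) ?size_sigma ?prednK //.
have : 0 < letter sigma k by case/and3P: hD.
by rewrite /letter => /gtr0_sgz ->; rewrite mul1r.
Qed.

Lemma mask_pos_lt_last x : (absz x <= k)%N -> 0 < x -> x != k%:Z ->
  (0 < mask_pos (absz x) < n)%N.
Proof.
have kk : (0 < k <= k)%N by rewrite k_gt0 leqnn.
move=> xk x0 xnk; have x_abs : (0 < absz x <= k)%N by lia.
have := leq_mask_pos kk x_abs; have := mask_pos_range x_abs; have := mask_pos_range kk.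
by lia.
Qed.

Lemma last_insert_fixed_range : 0 < letter insert_fixed n < n%:Z.
Proof.
have km1 : (k.-1 < size sigma)%N by rewrite size_sigma prednK.
have /andP [_ x_k] := sigma_abs (mem_nth 0 km1).
have x_pos : 0 < letter sigma k by case/and3P: hD.
have x_nf : letter sigma k != k%:Z.
  by have := @sigma_nonfixed k.-1; rewrite prednK //; apply.
rewrite last_insert_fixed !ltz_nat.
exact: mask_pos_lt_last.
Qed.

End InsertFixedPoints.

Lemma DDelta_classes k sigma : DDelta k sigma ->
  fixp_pos (posw sigma) = [::] /\
  (size (subc_pos (posw sigma)) + size (exc_pos (posw sigma)))%N = k.
Proof.
case/and3P => sp _ /allP nonfix.
have no_fixp : fixp_pos (posw sigma) = [::].
  apply/eqP; rewrite -size_eq0 size_map size_filter -leqn0 leqNgt -has_count.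
  by apply/hasP => -[p pL /= /eqP p_fixed]; move: (nonfix p pL); rewrite /= p_fixed eqxx.
split=> //; have := size_subc_fixp_exc (posw sigma).
by rewrite no_fixp size_posw (size_signed_perm sp) /=; lia.
Qed.

(* [psibar n sigma] takes values in [-s, s] and [n - e + 1, n], [gamma] in [s + 1, n - e]. *)
Lemma psibar_notin_gamma_word n k sigma x : DDelta k sigma -> (k <= n)%N ->
  x \in psibar n sigma -> x \notin gamma_word n sigma.
Proof.
move=> hD kn; have [_ size_se] := DDelta_classes hD.
case/and3P: (hD) => _ _ /allP nonfix.
rewrite psibarE => /mapP [[x0 j0] pL ->]; apply/negP.
rewrite /gamma_word => /mapP [j]; rewrite mem_iota => hj.
change (s_num sigma) with (size (subc_pos (posw sigma))) in hj.
change (e_num sigma) with (size (exc_pos (posw sigma))) in hj.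
have := nonfix _ pL; have [Sp _ Ep] := rank_gt0_class pL.
have := subc_rank_le (posw sigma) x0; have := exc_rank_le (posw sigma) x0.
rewrite /psibar_at /= in Sp Ep *.
by case: (ltgtP x0 j0%:Z) => h; lia.
Qed.

Section Bijection.
Variables (n k : nat) (sigma : seq int).
Hypotheses (k_gt0 : (0 < k)%N) (kn : (k <= n)%N) (hD : DDelta k sigma).
Local Notation tsigma := (psibar n sigma).
Local Notation gamma := (gamma_word n sigma).

Lemma size_psibar_sigma : size tsigma = k.
Proof. by rewrite psibarE size_map size_posw (size_signed_perm (signed_perm_sigma hD)). Qed.

Lemma size_gamma_word : size gamma = (n - k)%N.
Proof.
have [_ size_se] := DDelta_classes hD.
rewrite /gamma_word size_map size_iota.
change (s_num sigma) with (size (subc_pos (posw sigma))).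
change (e_num sigma) with (size (exc_pos (posw sigma))).
by lia.
Qed.

Section DeltaLt.
Variable pi : seq int.
Hypothesis hpi : Delta_lt n sigma pi.
Local Notation L := (posw pi).

Lemma signed_perm_Delta_lt : signed_perm n pi.
Proof. by case/and4P: hpi. Qed.

Lemma dp_Delta_lt : dp pi = sigma.
Proof. by case/and4P: hpi => _ /eqP. Qed.

Lemma psibar_nonfixed : map (psibar_at L n) (filter nonfixed L) = tsigma.
Proof. by rewrite -dp_Delta_lt (psibar_dp signed_perm_Delta_lt). Qed.

Lemma psibar_fixed : map (psibar_at L n) (filter (predC nonfixed) L) = gamma.
Proof. by rewrite -dp_Delta_lt (gamma_word_dp signed_perm_Delta_lt). Qed.

Lemma nonfixed_psibar : map nonfixed L = map (fun x => x \notin gamma) (psibar n pi).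
Proof.
rewrite psibarE -map_comp; apply/eq_in_map => q qL /=.
case: (boolP (nonfixed q)) => hq.
  have : psibar_at L n q \in tsigma.
    by rewrite -psibar_nonfixed map_f // mem_filter hq.
  by move/(psibar_notin_gamma_word hD kn) => ->.
have : psibar_at L n q \in gamma by rewrite -psibar_fixed map_f // mem_filter /= hq.
by move=> ->.
Qed.

End DeltaLt.

Lemma snd_filter_posw (a : pred (int * nat)) pi : signed_perm n pi ->
  map snd (filter a (posw pi)) = mask (map a (posw pi)) (iota 1 n).
Proof. by move=> sp; rewrite filter_mask map_mask unzip2_posw (size_signed_perm sp). Qed.

Lemma interleave_nonfixed pi : signed_perm n pi ->
  pi = interleave (map nonfixed (posw pi)) (map fst (filter nonfixed (posw pi)))
         (map Posz (mask (map (predC nonfixed) (posw pi)) (iota 1 n))).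
Proof.
move=> sp; rewrite -(snd_filter_posw _ sp) -map_comp.
have -> : map (Posz \o snd) (filter (predC nonfixed) (posw pi))
          = map fst (filter (predC nonfixed) (posw pi)).
  by apply/eq_in_map => q; rewrite mem_filter /= /nonfixed negbK => /andP [/eqP ->].
by rewrite interleave_filter unzip1_posw.
Qed.

Lemma psibar_Delta_lt_shuffle pi : Delta_lt n sigma pi ->
  shuffle tsigma gamma (psibar n pi) /\ last 0 (psibar n pi) = letter tsigma k.
Proof.
move=> hpi; have sp := signed_perm_Delta_lt hpi; have n_gt0 : (0 < n)%N by lia.
split.
  rewrite /shuffle -(psibar_nonfixed hpi) -(psibar_fixed hpi) psibarE.
  rewrite !map_subseq ?filter_subseq //= perm_sym -map_cat.
  by apply: perm_map; rewrite perm_filterC.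
have [L' [q Lq]] : exists L' q, posw pi = rcons L' q.
  case/lastP E : (posw pi) => [|L' q]; last by exists L', q.
  by move: (size_posw pi); rewrite E (size_signed_perm sp) => n0; rewrite -n0 in n_gt0.
have q_last : q = (letter pi n, n).
  rewrite -(last_rcons (0, 0%N) L' q) -Lq -nth_last size_posw (size_signed_perm sp).
  by rewrite nth_posw ?(size_signed_perm sp) ?prednK // ltn_predL.
have nf_q : nonfixed q.
  by case/and4P: hpi => _ _ _; rewrite q_last /nonfixed /= lt_neqAle => /andP [].
rewrite /letter -size_psibar_sigma nth_last -(psibar_nonfixed hpi) psibarE Lq.
by rewrite filter_rcons nf_q !map_rcons !last_rcons.
Qed.

Lemma psibar_Delta_lt_inj : {in Delta_lt n sigma &, injective (psibar n)}.
Proof.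
move=> p1 p2 h1 h2 e.
have sp1 := signed_perm_Delta_lt h1; have sp2 := signed_perm_Delta_lt h2.
have same_mask : map nonfixed (posw p1) = map nonfixed (posw p2).
  by rewrite !nonfixed_psibar // e.
have same_cmask : map (predC nonfixed) (posw p1) = map (predC nonfixed) (posw p2).
  by rewrite -[LHS]/(map (negb \o nonfixed) (posw p1)) map_comp same_mask -map_comp.
have nonfixed_abs p : signed_perm n p ->
    {in map fst (filter nonfixed (posw p)), forall x, 0 < absz x}%N.
  move=> sp x /mapP [q]; rewrite mem_filter => /andP [_ qL] ->.
  by case/andP: (signed_perm_posw sp qL).
have same_letters : map fst (filter nonfixed (posw p1)) = map fst (filter nonfixed (posw p2)).
  apply: red_inj (nonfixed_abs _ sp1) (nonfixed_abs _ sp2) _.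
  - apply: perm_trans (perm_abs_nonfixed sp1) _; rewrite perm_sym.
    apply: perm_trans (perm_abs_nonfixed sp2) _.
    by rewrite !snd_filter_posw // same_mask.
  - by have := dp_Delta_lt h1; rewrite -(dp_Delta_lt h2) /dp.
by rewrite (interleave_nonfixed sp1) (interleave_nonfixed sp2) same_mask same_cmask same_letters.
Qed.

Lemma filter_subseq_count (T : eqType) (a : pred T) (s w : seq T) :
  subseq s w -> all a s -> count a w = size s -> filter a w = s.
Proof.
move=> sw all_a cw; have sub : subseq s (filter a w) by rewrite subseq_filter all_a.
by have := (size_subseq_leqif sub).2; rewrite size_filter cw eqxx => /esym/eqP.
Qed.

Lemma psibar_Delta_lt_surj alpha : shuffle tsigma gamma alpha ->
  last 0 alpha = letter tsigma k -> exists2 pi, Delta_lt n sigma pi & psibar n pi = alpha.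
Proof.
case/and3P => s1 s2 hp hlast; pose a x := x \notin gamma.
have a_tsigma : all a tsigma.
  by apply/allP => x; apply: psibar_notin_gamma_word hD kn.
have a_gamma : all (predC a) gamma by apply/allP => x xg; rewrite /= /a negbK.
have count_a : count a alpha = size tsigma.
  have := a_tsigma; rewrite all_count => /eqP count_ts.
  rewrite (permP hp) count_cat count_ts.
  suff -> : count a gamma = 0%N by rewrite addn0.
  by apply/eqP; rewrite -leqn0 leqNgt -has_count -all_predC.
have count_na : count (predC a) alpha = size gamma.
  apply/eqP; rewrite -(eqn_add2l (count a alpha)) count_predC count_a.
  by rewrite (perm_size hp) size_cat.
have alphaE : interleave (map a alpha) tsigma gamma = alpha.
  have := interleave_filter a id alpha; rewrite !map_id.
  by rewrite (filter_subseq_count s1) // (filter_subseq_count s2).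
pose m := map a alpha.
have size_m : size m = n.
  by rewrite size_map (perm_size hp) size_cat size_psibar_sigma size_gamma_word; lia.
have count_m : count id m = k by rewrite count_map count_a size_psibar_sigma.
have last_m : last false m.
  rewrite -nth_last size_map (nth_map 0) ?nth_last ?hlast; last first.
    by rewrite -(size_map a) -/m size_m prednK //; lia.
  by apply: psibar_notin_gamma_word hD kn _; rewrite /letter mem_nth // size_psibar_sigma prednK.
have ins := (signed_perm_insert_fixed k_gt0 hD size_m count_m last_m,
  dp_insert_fixed k_gt0 hD size_m count_m last_m,
  last_insert_fixed_range k_gt0 hD size_m count_m last_m,
  map_nonfixed_insert_fixed k_gt0 hD size_m count_m last_m).
have hpi : Delta_lt n sigma (insert_fixed n sigma m) by rewrite /Delta_lt !ins eqxx.
exists (insert_fixed n sigma m) => //.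
by rewrite psibarE -(interleave_filter nonfixed) !ins psibar_nonfixed ?psibar_fixed.
Qed.

End Bijection.

Theorem lemma5p6 (n k : nat) (sigma : seq int) :
  (1 <= k)%N -> (k <= n)%N -> DDelta k sigma ->
  let tsigma := psibar n sigma in
  let gamma := gamma_word n sigma in
  [/\ (forall pi, Delta_lt n sigma pi ->
         shuffle tsigma gamma (psibar n pi) /\
         last 0 (psibar n pi) = letter tsigma k),
      {in Delta_lt n sigma &, injective (psibar n)},
      (forall alpha, shuffle tsigma gamma alpha -> last 0 alpha = letter tsigma k ->
         exists2 pi, Delta_lt n sigma pi & psibar n pi = alpha)
    & (forall pi, Delta_lt n sigma pi -> fmaj pi = fmaj (psibar n pi))].
Proof.
move=> k_gt0 kn hD /=; split.
- exact: psibar_Delta_lt_shuffle k_gt0 kn hD.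
- exact: psibar_Delta_lt_inj kn hD.
- exact: psibar_Delta_lt_surj k_gt0 kn hD.
- by move=> pi /signed_perm_Delta_lt sp; rewrite fmaj_psibar.
Qed.
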